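(* Let $H \subset L$ be light-cone regular, let $h \in H$, and let $H' = H \setminus \{h\}$. If $H'$ is light-cone regular, then $h$ is a minimal element of $H$ with respect to $\le$.
   Context: Let $L$ be a finitely generated $\mathbb{Z}$-module and $v_1,\dots,v_N\in L$ distinct elements linearly independent over $\mathbb{Z}_{\ge 0}$ (i.e. $\sum_i a_i v_i=0$ with all $a_i\in\mathbb{Z}_{\ge0}$ forces all $a_i=0$). Let $S=\{\sum_i a_iv_i : a_i\in\mathbb{Z}_{\ge0}\}$ and define the partial order $h_1\le h_2$ iff $h_1-h_2\in S$. A nonempty subset $H\subset L$ is light-cone regular if for every $h\in H$ the set $\{h'\in H: h'\le h\}$ is finite and $\{h'\in L: h'\ge h\}\subset H$. *)

From HB Require Import structures.
From mathcomp Require Import all_boot all_order all_algebra.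
Set Implicit Arguments. Unset Strict Implicit. Unset Printing Implicit Defensive.
Import GRing.Theory.
Local Open Scope ring_scope.

Definition fin_gen_zmod (L : zmodType) : Prop :=
  exists gs : seq L, forall x : L,
    exists c : 'I_(size gs) -> int, x = \sum_(i < size gs) gs`_i *~ c i.

Definition nonneg_lin_indep (L : zmodType) (N : nat) (v : 'I_N -> L) : Prop :=
  forall a : 'I_N -> nat, \sum_(i < N) v i *+ a i = 0 -> forall i, a i = 0%N.

Definition coneS (L : zmodType) (N : nat) (v : 'I_N -> L) (x : L) : Prop :=
  exists a : 'I_N -> nat, x = \sum_(i < N) v i *+ a i.

Definition cone_le (L : zmodType) (N : nat) (v : 'I_N -> L) (h1 h2 : L) : Prop :=
  coneS v (h1 - h2).

Definition finite_subset (L : eqType) (P : L -> Prop) : Prop :=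
  exists s : seq L, forall x, P x -> x \in s.

Definition light_cone_regular (L : zmodType) (N : nat) (v : 'I_N -> L)
    (H : L -> Prop) : Prop :=
  (exists h, H h) /\
  forall h, H h ->
    finite_subset (fun h' => H h' /\ cone_le v h' h) /\
    (forall h' : L, cone_le v h h' -> H h').

Definition minimal_in (L : zmodType) (N : nat) (v : 'I_N -> L)
    (H : L -> Prop) (h : L) : Prop :=
  H h /\ forall h', H h' -> cone_le v h' h -> h' = h.

From mathcomp Require Import all_boot all_order all_algebra.

Lemma light_cone_regular_ge {L : zmodType} {N : nat} {v : 'I_N -> L}
    {H : L -> Prop} {h h' : L} :
  light_cone_regular v H -> H h -> cone_le v h h' -> H h'.
Proof. by move=> [_ regH] /regH [_]; apply. Qed.

(* Only the upward closure of [H'] matters: an element of [H] strictly below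
   [h] would lie in [H'], which would then contain [h]. *)
Theorem lemma3p12 (L : zmodType) (N : nat) (v : 'I_N -> L)
  (hL : fin_gen_zmod L) (hinj : injective v) (hind : nonneg_lin_indep v)
  (H : L -> Prop) (hH : light_cone_regular v H) (h : L) (hh : H h)
  (hH' : light_cone_regular v (fun x => H x /\ x <> h)) :
  minimal_in v H h.
Proof.
split=> // h' Hh' le_h'h.
case: (eqVneq h' h) => // /eqP ne_h'h.
by case: (light_cone_regular_ge hH' (conj Hh' ne_h'h) le_h'h).
Qed.
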